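(* Let $X$ be an exponential vector space over $\mathbb K$ and $V$ a vector space over $\mathbb K$. Then the evs $X\times V$ has a basis if and only if $X$ has a basis. Moreover (when these bases exist) $\dim(X\times V)=[\dim(X\smallsetminus X_0):\dim X_0+\dim V]$.
   Context: $\mathbb K$ is $\mathbb R$ or $\mathbb C$. An exponential vector space (evs) over a field $K$ is a partially ordered set $(X,\leq)$ with a binary operation $+$ on $X$ and a map $K\times X\to X$, $(\alpha,x)\mapsto \alpha x$, such that: (A1) $(X,+)$ is a commutative semigroup with identity $\theta$; (A2) $x\leq y$ implies $x+z\leq y+z$ and $\alpha x\leq \alpha y$ for all $z\in X$, $\alpha\in K$; (A3) $\alpha(x+y)=\alpha x+\alpha y$, $\alpha(\beta x)=(\alpha\beta)x$, $(\alpha+\beta)x\leq \alpha x+\beta x$, $1x=x$; (A4) $\alpha x=\theta$ iff $\alpha=0$ or $x=\theta$; (A5) $x+(-1)x=\theta$ iff $x\in X_0$, where $X_0:=\{z\in X: y\not\leq z \text{ for all } y\in X\smallsetminus\{z\}\}$ (the set of minimal elements, called the primitive space; it is a vector space over $K$); (A6) for each $x\in X$ there is $p\in X_0$ with $p\leq x$. For $x\in X\smallsetminus X_0$ let $L(x):=\{z\in X: z\geq \alpha x+p \text{ for some } \alpha\in K\smallsetminus\{0\},\ p\in X_0\}$. A subset $B\subseteq X\smallsetminus X_0$ generates $X\smallsetminus X_0$ if $X\smallsetminus X_0=\bigcup_{b\in B}L(b)$. Elements $x,y\in X\smallsetminus X_0$ are orderly dependent if $x\in L(y)$ or $y\in L(x)$,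 and orderly independent otherwise; $B$ is orderly independent if any two distinct members are orderly independent. A basis of $X\smallsetminus X_0$ is an orderly independent generating subset of $X\smallsetminus X_0$; ''$X$ has a basis'' means $X\smallsetminus X_0$ has a basis. All bases of $X\smallsetminus X_0$ have the same cardinality, denoted $\dim(X\smallsetminus X_0)$; $\dim X_0$ is the vector-space dimension of $X_0$ (taken as $0$ if $X_0=\{\theta\}$), and $\dim X:=[\dim(X\smallsetminus X_0):\dim X_0]$. The evs $X\times V$ has operations $(x_1,e_1)+(x_2,e_2)=(x_1+x_2,e_1+e_2)$, $\alpha(x,e)=(\alpha x,\alpha e)$, and order $(x_1,e_1)\leq(x_2,e_2)$ iff $x_1\leq x_2$ and $e_1=e_2$; its primitive space is $X_0\times V$. *)

From mathcomp Require Import all_boot all_algebra.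
From mathcomp Require Import boolp classical_sets cardinality reals.
From mathcomp Require Import complex.

Set Implicit Arguments.
Unset Strict Implicit.
Unset Printing Implicit Defensive.

Import GRing.Theory.
Local Open Scope ring_scope.
Local Open Scope classical_set_scope.

Record evs_ops (K T : Type) := EvsOps {
  ev_le : T -> T -> Prop;
  ev_add : T -> T -> T;
  ev_zero : T;
  ev_smul : K -> T -> T }.

Section EVS.
Variables (K : fieldType) (T : Type) (o : evs_ops K T).

Local Notation le := (ev_le o).
Local Notation add := (ev_add o).
Local Notation th := (ev_zero o).
Local Notation sm := (ev_smul o).

(* primitive space X_0 : the minimal elements *)
Definition prim : set T := fun z => forall y, y <> z -> ~ le y z.

Record is_evs : Prop := IsEvs {
  ev_le_refl : forall x, le x x;
  ev_le_trans : forall x y z, le x y -> le y z -> le x z;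
  ev_le_anti : forall x y, le x y -> le y x -> x = y;
  ev_addA : forall x y z, add x (add y z) = add (add x y) z;
  ev_addC : forall x y, add x y = add y x;
  ev_add0 : forall x, add th x = x;
  ev_le_add : forall x y z, le x y -> le (add x z) (add y z);
  ev_le_smul : forall (a : K) x y, le x y -> le (sm a x) (sm a y);
  ev_smulD : forall (a : K) x y, sm a (add x y) = add (sm a x) (sm a y);
  ev_smulA : forall (a b : K) x, sm a (sm b x) = sm (a * b) x;
  ev_smul_addle : forall (a b : K) x, le (sm (a + b) x) (add (sm a x) (sm b x));
  ev_smul1 : forall x, sm 1 x = x;
  ev_smul_eq0 : forall (a : K) x, sm a x = th <-> (a = 0 \/ x = th);
  ev_inv_prim : forall x, add x (sm (-1) x) = th <-> prim x;
  ev_prim_below : forall x, exists2 p, prim p & le p x }.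

Definition Lset (x : T) : set T :=
  fun z => exists a : K, exists p : T, [/\ a <> 0, prim p & le (add (sm a x) p) z].

Definition generates (B : set T) : Prop :=
  B `<=` ~` prim /\ ~` prim = \bigcup_(b in B) Lset b.

Definition orderly_dep (x y : T) : Prop := Lset y x \/ Lset x y.

Definition orderly_indep (B : set T) : Prop :=
  forall x y, B x -> B y -> x <> y -> ~ orderly_dep x y.

Definition evs_basis (B : set T) : Prop :=
  B `<=` ~` prim /\ orderly_indep B /\ generates B.

Definition has_basis : Prop := exists B, evs_basis B.

End EVS.

(* Hamel basis of a subspace U (given as a set, e.g. X_0) of a carrier with a
   vector-space structure given by add, zero, scalar multiplication. *)
Section Hamel.
Variables (K : fieldType) (T : Type) (add : T -> T -> T) (zero : T)
          (sm : K -> T -> T).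

Definition lincomb n (c : 'I_n -> K) (f : 'I_n -> T) : T :=
  \big[add/zero]_(i < n) sm (c i) (f i).

Definition lin_indep (B : set T) : Prop :=
  forall n (f : 'I_n -> T) (c : 'I_n -> K), injective f -> (forall i, B (f i)) ->
    lincomb c f = zero -> forall i, c i = 0.

Definition spans (U B : set T) : Prop :=
  forall p, U p -> exists n (f : 'I_n -> T) (c : 'I_n -> K),
    (forall i, B (f i)) /\ p = lincomb c f.

Definition hamel_basis (U B : set T) : Prop :=
  B `<=` U /\ lin_indep B /\ spans U B.

End Hamel.

Definition prim_hamel_basis (K : fieldType) T (o : evs_ops K T) (B : set T) :=
  hamel_basis (ev_add o) (ev_zero o) (ev_smul o) (prim o) B.

Definition vs_hamel_basis (K : fieldType) (V : lmodType K) (B : set V) :=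
  hamel_basis (@GRing.add V) (0 : V) (@GRing.scale K V) setT B.

Definition prod_ops (K : fieldType) T (o : evs_ops K T) (V : lmodType K) :
    evs_ops K (T * V) :=
  EvsOps (fun u w : T * V => ev_le o u.1 w.1 /\ u.2 = w.2)
         (fun u w : T * V => (ev_add o u.1 w.1, u.2 + w.2))
         (ev_zero o, 0)
         (fun (a : K) (u : T * V) => (ev_smul o a u.1, a *: u.2)).

(* The dimension statement
   dim (X x V) = [dim (X \ X0) : dim X0 + dim V] is expressed as
   - any basis of (X x V) \ (X x V)_0 is equipotent to any basis of X \ X0;
   - any Hamel basis of (X x V)_0 is equipotent to the disjoint union of a
     Hamel basis of X0 and a Hamel basis of V (cardinal sum). *)
Definition thm8_for (K : fieldType) : Prop :=
  forall (T : Type) (o : evs_ops K T) (V : lmodType K),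
    is_evs o ->
    (has_basis (prod_ops o V) <-> has_basis o) /\
    (forall (B : set T) (B' : set (T * V)),
        evs_basis o B -> evs_basis (prod_ops o V) B' ->
        card_eq B' B /\
        (forall (H : set (T * V)) (H1 : set T) (H2 : set V),
            prim_hamel_basis (prod_ops o V) H ->
            prim_hamel_basis o H1 -> vs_hamel_basis H2 ->
            card_eq H ([set inl x | x in H1] `|` [set inr v | v in H2]))).

(* (X x V)_0 = X_0 x V, and w lies in L(u) in X x V exactly when w.1 lies in
   L(u.1) in X.  Hence the first projection maps a basis of (X x V) \ (X x V)_0
   injectively onto a basis of X \ X_0, and b |-> (b, 0) maps bases back.  Two
   bases B, C of X \ X_0 are equipotent: choosing for b in B some c in C with
   b in L(c) is injective, because c in L(b) as well and L is transitive.
   On the primitive side, X_0 x V is a vector space with basis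
   H_1 x {0} u {0} x H_2, and Hamel bases of a vector space are equipotent
   (by the rank of a coefficient matrix when one of them is finite, and by
   |B| <= |C x N| = |C| when C is infinite). *)

From HB Require Import structures.
From mathcomp Require Import all_boot all_algebra.
From mathcomp Require Import boolp classical_sets cardinality reals complex.
From mathcomp Require Import zify finmap.

Set Implicit Arguments.
Unset Strict Implicit.
Unset Printing Implicit Defensive.

Import GRing.Theory.
Local Open Scope ring_scope.
Local Open Scope classical_set_scope.

Section Cardinality.
Local Open Scope card_scope.

Lemma card_le_injon T U (A : set T) (B : set U) (f : T -> U) :
  f @` A `<=` B -> {in A &, injective f} -> A #<= B.
Proof.
move=> fAB finj; rewrite -(card_le_eql (inj_card_eq finj)).
exact: subset_card_le.
Qed.

Lemma card_eq_preimage T U (f : T -> U) (Y : set U) :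
  injective f -> Y `<=` range f -> f @^-1` Y #= Y.
Proof.
move=> finj Yf; have {2}-> : Y = f @` (f @^-1` Y).
  apply/seteqP; split=> [y Yy|]; last exact: image_preimage_subset.
  by have [x _ fx] := Yf y Yy; exists x; rewrite /preimage /= fx.
by rewrite card_eq_sym; apply: inj_card_eq => x y _ _; apply: finj.
Qed.

Lemma disjoint_seqs_cofinite T (A : set T) : exists M : set (nat -> T),
  [/\ forall s, M s -> injective s /\ range s `<=` A,
      forall s t, M s -> M t -> s <> t -> forall i j, s i <> t j &
      finite_set (A `\` \bigcup_(s in M) range s)].
Proof.
pose P (M : set (nat -> T)) :=
  (forall s, M s -> injective s /\ range s `<=` A) /\
  (forall s t, M s -> M t -> s <> t -> forall i j, s i <> t j).
have [M [[MA Mdisj] Mmax]] : exists M, P M /\ (forall N, M `<` N -> ~ P N).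
  apply: Zorn_bigcup => F FP Ftot; split.
    by move=> s [X FX Xs]; exact: (FP X FX).1 s Xs.
  move=> s t [X FX Xs] [Y FY Yt]; case: (Ftot X Y FX FY) => XY.
    exact: (FP Y FY).2 s t (XY s Xs) Yt.
  exact: (FP X FX).2 s t Xs (XY t Yt).
exists M; split => //; apply: contrapT.
elim/Ppointed: T => T in A M P MA Mdisj Mmax *.
  by rewrite emptyE.
move=> /infiniteP/pcard_leP/injfunPex [g gR ginj].
have gR' n : (A `\` \bigcup_(s in M) range s) (g n) by exact: gR.
have gM : ~ M g.
  by move=> Mg; case: (gR' 0%N) => _; apply; exists g => //; exists 0%N.
apply: (Mmax (M `|` [set g])).
  by split=> [s Ms|/(_ g (or_intror erefl))]; [left | exact: gM].
split.
  move=> s [Ms|->]; first exact: MA.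
  split=> [i j|_ [n _ <-]]; last by case: (gR' n).
  by apply: ginj; rewrite in_setE.
move=> s t [Ms|->] [Mt|->] st i j.
- exact: Mdisj.
- by move=> e; case: (gR' j) => _; apply; exists s => //; exists i.
- by move=> e; case: (gR' i) => _; apply; exists t => //; exists j.
- by [].
Qed.

Lemma infinite_setX_nat_le T (A : set T) :
  infinite_set A -> A `*` [set: nat] #<= A.
Proof.
move=> Ainf; have [M [MA Mdisj Rfin]] := disjoint_seqs_cofinite A.
set R := _ `\` _ in Rfin.
have [s0 Ms0] : exists s, M s.
  apply: contrapT => nM; apply: Ainf; apply: sub_finite_set Rfin => x Ax.
  by split=> // -[s Ms _]; apply: nM; exists s.
have [r rinj] : exists r : T -> nat, {in R &, injective r}.
  exact/pcard_injP/finite_set_countable.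
have [pi piI] : exists pi : nat * nat -> nat, injective pi.
  have /card_eqPle [/pcard_injP [pi piI] _] := card_nat2.
  by exists pi => x y; apply: piI; rewrite in_setE.
(* points on a sequence get even codes, the finitely many others odd ones *)
pose code (x : T) : (nat -> T) * nat :=
  match pselect (exists sn : (nat -> T) * nat, M sn.1 /\ x = sn.1 sn.2) with
  | left e => ((sval (cid e)).1, 2 * (sval (cid e)).2)%N
  | right _ => (s0, (2 * r x).+1)
  end.
have code_M x : M (code x).1.
  by rewrite /code; case: pselect => [e|//]; case: (svalP (cid e)).
have code_inj : {in A &, injective code}.
  move=> x y; rewrite !in_setE /code => Ax Ay.
  have inR z : A z -> ~ (exists sn : (nat -> T) * nat, M sn.1 /\ z = sn.1 sn.2) -> R z.
    by move=> Az nz; split=> // -[s Ms [n _ e]]; apply: nz; exists (s, n).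
  case: pselect => [e1|n1]; case: pselect => [e2|n2] [].
  - move: (svalP (cid e1)) (svalP (cid e2)).
    set a := sval _; set b := sval _ => -[_ ->] [_ ->] -> /eqP.
    by rewrite eqn_mul2l /= => /eqP ->.
  - by move=> _; lia.
  - by move=> _; lia.
  - move=> e; have /rinj : r x = r y by lia.
    by apply; rewrite in_setE; apply: inR.
pose h (xk : T * nat) := (code xk.1).1 (pi ((code xk.1).2, xk.2)).
apply: (card_le_injon (f := h)) => [_ [[x k] _ <-]|[x k] [y l]].
  by apply: (proj2 (MA _ (code_M x))); exists (pi ((code x).2, k)).
rewrite !in_setE /h => -[/= Ax _] [/= Ay _] e.
have ecode : (code x).1 = (code y).1.
  by apply: contrapT => ne; exact: Mdisj _ _ (code_M x) (code_M y) ne _ _ e.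
move: e; rewrite ecode => /(proj1 (MA _ (code_M y))) /piI [e ->].
rewrite (code_inj x y) ?in_setE //.
by rewrite [code x]surjective_pairing ecode e -surjective_pairing.
Qed.

End Cardinality.

Section LinearCombinations.
Variables (K : fieldType) (W : lmodType K).

Definition lcomb (s : seq (K * W)) : W := \sum_(p <- s) p.1 *: p.2.

Definition lcoef (s : seq (K * W)) (x : W) : K := \sum_(p <- s | p.2 == x) p.1.

Definition supported_in (B : set W) (s : seq (K * W)) := {in s, forall p, B p.2}.

Definition free_set (B : set W) := forall s, supported_in B s ->
  lcomb s = 0 -> forall x, lcoef s x = 0.

Definition spanning_set (B : set W) :=
  forall v, exists2 s, supported_in B s & v = lcomb s.

Definition basis_set (B : set W) := free_set B /\ spanning_set B.

Lemma lcomb_cons p s : lcomb (p :: s) = p.1 *: p.2 + lcomb s.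
Proof. by rewrite /lcomb big_cons. Qed.

Lemma lcoef_cons p s x :
  lcoef (p :: s) x = (if p.2 == x then p.1 else 0) + lcoef s x.
Proof. by rewrite /lcoef big_cons; case: ifP; rewrite ?add0r. Qed.

Lemma lcoef_eq0 s x : {in s, forall p, p.2 != x} -> lcoef s x = 0.
Proof. by move=> sx; rewrite /lcoef big_hasC //; apply/hasPn. Qed.

Lemma lcomb_flatten (S : W -> seq (K * W)) t :
  lcomb (flatten [seq [seq (q.1 * p.1, p.2) | p <- S q.2] | q <- t]) =
  \sum_(q <- t) q.1 *: lcomb (S q.2).
Proof.
rewrite /lcomb big_flatten big_map; apply: eq_bigr => q _.
by rewrite big_map scaler_sumr; apply: eq_bigr => p _; rewrite scalerA.
Qed.

Lemma lcomb_lcoef s u : uniq u -> {in s, forall p, p.2 \in u} ->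
  lcomb s = \sum_(x <- u) lcoef s x *: x.
Proof.
move=> uu; elim: s => [|p s IH] su.
  by rewrite /lcomb big_nil big1 // => x _; rewrite /lcoef big_nil scale0r.
rewrite lcomb_cons IH => [|q qs]; last by apply: su; rewrite inE qs orbT.
have pu : p.2 \in u by apply: su; rewrite inE eqxx.
under [RHS]eq_bigr => x _ do rewrite lcoef_cons scalerDl.
rewrite big_split /= [X in _ = X + _](bigD1_seq p.2) //= eqxx.
rewrite [X in _ = _ + X + _]big1 ?addr0 // => x.
by rewrite eq_sym => /negbTE ->; rewrite scale0r.
Qed.

Lemma free_set_neq0 B : free_set B -> ~ B 0.
Proof.
move=> freeB B0; have /eqP : lcoef [:: (1, 0)] 0 = 0.
  apply: freeB => [p|]; first by rewrite inE => /eqP ->.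
  by rewrite /lcomb big_seq1 scaler0.
by rewrite lcoef_cons eqxx /lcoef big_nil addr0 oner_eq0.
Qed.

Lemma free_set_lcoef B s : free_set B ->
  {in s, forall p, B p.2 \/ p.2 = 0} -> lcomb s = 0 -> forall x, B x -> lcoef s x = 0.
Proof.
move=> freeB sB s0 x Bx.
have x0 : x != 0 by apply: contra_notN (free_set_neq0 freeB) => /eqP <-.
pose s' := [seq p <- s | p.2 != 0].
have -> : lcoef s x = lcoef s' x.
  rewrite /lcoef big_filter_cond; apply: eq_bigl => p.
  by case: eqVneq => [->|]; rewrite ?x0 ?andbF.
apply: freeB => [p|].
  by rewrite mem_filter => /andP[/eqP p0 /sB []].
rewrite -s0 /lcomb big_filter [RHS](bigID (fun p => p.2 != 0)) /=.
by rewrite [X in _ = _ + X]big1 ?addr0 // => p /negPn/eqP ->; rewrite scaler0.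
Qed.

Lemma lin_indep_free_set B :
  lin_indep (@GRing.add W) 0 (@GRing.scale K W) B -> free_set B.
Proof.
move=> indepB s sB s0 x; set u := undup [seq p.2 | p <- s].
have su : {in s, forall p, p.2 \in u} by move=> p ps; rewrite mem_undup map_f.
have [xu|xu] := boolP (x \in u); last first.
  by apply: lcoef_eq0 => p ps; apply: contraNneq xu => <-; exact: su.
pose f (i : 'I_(size u)) := nth 0 u i.
have finj : injective f.
  by move=> i j /eqP; rewrite nth_uniq ?undup_uniq // => /eqP; apply: val_inj.
have fB i : B (f i).
  have : f i \in u := mem_nth _ (ltn_ord i).
  by rewrite mem_undup => /mapP [p ps ->]; exact: sB.
have comb0 : lincomb +%R 0 *:%R (fun i => lcoef s (f i)) f = 0.
  by rewrite /lincomb -[RHS]s0 (lcomb_lcoef (undup_uniq _) su) (big_nth 0) big_mkord.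
have xi : (index x u < size u)%N by rewrite index_mem.
have := indepB _ f _ finj fB comb0 (Ordinal xi).
by rewrite /f /= nth_index.
Qed.

Lemma spans_spanning_set B :
  spans (@GRing.add W) 0 (@GRing.scale K W) setT B -> spanning_set B.
Proof.
move=> spanB v; have [n [f [c [fB ->]]]] := spanB v I.
exists [seq (c i, f i) | i <- enum 'I_n]; first by move=> p /mapP [i _ ->]; apply: fB.
by rewrite /lcomb big_map /lincomb big_enum.
Qed.

End LinearCombinations.

Lemma lcomb_linear (K : fieldType) (W W' : lmodType K) (f : {linear W -> W'}) s :
  f (lcomb s) = lcomb [seq (p.1, f p.2) | p <- s].
Proof.
by rewrite /lcomb big_map linear_sum; apply: eq_bigr => p _; rewrite linearZ.
Qed.

Section Dimension.
Variables (K : fieldType) (W : lmodType K).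
Local Open Scope card_scope.

Lemma free_set_fset_card_le (B : set W) (F G : {fset W}) :
  free_set B -> [set` F] `<=` B ->
  {in F, forall b, exists2 s, supported_in [set` G] s & b = lcomb s} ->
  (#|` F| <= #|` G|)%N.
Proof.
move=> freeB FB FG; rewrite leqNgt; apply/negP => ltGF.
set sb := enum_fset F; set sc := enum_fset G.
pose m := size sb; pose n := size sc.
have ht (i : 'I_m) :
    {t : seq (K * W) | {in t, forall p, p.2 \in sc} /\ nth 0 sb i = lcomb t}.
  by apply: cid; have [t tG ->] := FG _ (mem_nth 0 (ltn_ord i)); exists t.
pose A : 'M[K]_(m, n) := \matrix_(i, j) lcoef (sval (ht i)) (nth 0 sc j).
have rowA (i : 'I_m) : nth 0 sb i = \sum_(j < n) A i j *: nth 0 sc j.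
  case: (svalP (ht i)) => tG ->; rewrite (lcomb_lcoef (fset_uniq G) tG).
  by rewrite (big_nth 0) big_mkord; apply: eq_bigr => j _; rewrite mxE.
have /rowV0Pn [u /sub_kermxP uA u_neq0] : kermx A != 0.
  rewrite kermx_eq0 /row_free; apply: contraTneq ltGF => rkA.
  by rewrite -leqNgt (leq_trans _ (rank_leq_col A)) // rkA.
pose s := [seq (u 0 i, nth 0 sb i) | i <- enum 'I_m].
have s0 : lcomb s = 0.
  rewrite /lcomb big_map big_enum /=.
  under eq_bigr => i _ do rewrite rowA scaler_sumr.
  rewrite exchange_big /= big1 // => j _.
  under eq_bigr => i _ do rewrite scalerA.
  rewrite -scaler_suml.
  have -> : \sum_i u 0 i * A i j = (u *m A) 0 j by rewrite mxE.
  by rewrite uA mxE scale0r.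
have sB : supported_in B s by move=> p /mapP [i _ ->]; apply/FB/mem_nth.
apply/negP: u_neq0; rewrite negbK; apply/eqP/rowP => k.
have := freeB s sB s0 (nth 0 sb k).
rewrite /lcoef big_map big_enum_cond /= (eq_bigl (pred1 k)) => [|i].
  by rewrite big_pred1_eq mxE.
by rewrite /= nth_uniq ?fset_uniq.
Qed.

Lemma free_set_card_le_finite (B C : set W) :
  free_set B -> spanning_set C -> finite_set C -> B #<= C.
Proof.
move=> freeB spanC finC; set G := fset_set C.
have bound (F : {fset W}) : [set` F] `<=` B -> (#|` F| <= #|` G|)%N.
  move=> FB; apply: (free_set_fset_card_le freeB FB) => b _.
  by rewrite fset_setK.
have finB : finite_set B.
  apply: contrapT => /(infinite_set_fset #|` G|.+1) [F /bound].
  by case: leqP.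
have /finite_setP [k Bk] := finB; have /finite_setP [l Cl] := finC.
rewrite (card_le_eql Bk) (card_le_eqr Cl) card_le_II.
by rewrite -(card_fset_set Bk) -(card_fset_set Cl) bound // fset_setK.
Qed.

(* Otherwise expanding b through C and then through B writes b as a
   combination of the other vectors of B. *)
Lemma free_set_mem_support (B C : set W) (S : W -> seq (K * W)) :
  free_set B -> spanning_set C ->
  (forall w, supported_in B (S w) /\ w = lcomb (S w)) ->
  forall b, B b -> exists2 c, C c & b \in [seq p.2 | p <- S c].
Proof.
move=> freeB spanC hS b Bb; apply: contrapT => nb.
have [t tC bt] := spanC b.
pose r := flatten [seq [seq (q.1 * p.1, p.2) | p <- S q.2] | q <- t].
have rb : lcomb r = b.
  rewrite lcomb_flatten bt [RHS]/lcomb.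
  by apply: eq_bigr => q _; rewrite -(proj2 (hS _)).
have rB : {in r, forall p, B p.2 /\ p.2 != b}.
  move=> p /flattenP [l /mapP [q qt ->]] /mapP [p' p'S ->] /=.
  split; first exact: (proj1 (hS _)) _ p'S.
  by apply: contra_notN nb => /eqP <-; exists q.2; [exact: tC | exact: map_f].
have r'B : supported_in B ((-1, b) :: r).
  by move=> p; rewrite inE => /predU1P [-> //|/rB []].
have r'0 : lcomb ((-1, b) :: r) = 0 by rewrite lcomb_cons rb scaleN1r addNr.
have /eqP := freeB _ r'B r'0 b.
by rewrite lcoef_cons eqxx lcoef_eq0 ?addr0 ?oppr_eq0 ?oner_eq0 // => p /rB [].
Qed.

Lemma basis_set_card_le_infinite (B C : set W) :
  basis_set B -> spanning_set C -> infinite_set C -> B #<= C.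
Proof.
move=> [freeB spanB] spanC infC.
have [S hS] : {S : W -> seq (K * W) &
    forall w, supported_in B (S w) /\ w = lcomb (S w)}.
  apply: (@choice _ _ (fun w s => supported_in B s /\ w = lcomb s)) => w.
  by have [s] := spanB w; exists s.
have cover := free_set_mem_support freeB spanC hS.
have [c_ hc] : {c_ : W -> W &
    forall b, B b -> C (c_ b) /\ b \in [seq p.2 | p <- S (c_ b)]}.
  apply: (@choice _ _ (fun b c => B b -> C c /\ b \in [seq p.2 | p <- S c])).
  move=> b; have [/cover [c]|] := pselect (B b); last by exists b.
  by exists c.
pose g b := (c_ b, index b [seq p.2 | p <- S (c_ b)]).
apply: card_le_trans (infinite_setX_nat_le infC).
apply: (card_le_injon (f := g)) => [_ [b Bb <-]|b b'].
  by split => //; case: (hc b Bb).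
rewrite !in_setE => Bb Bb' [e ie].
rewrite -(nth_index 0 (proj2 (hc b Bb))) ie e nth_index //.
by case: (hc b' Bb').
Qed.

Lemma basis_set_card_eq (B C : set W) : basis_set B -> basis_set C -> B #= C.
Proof.
suff card_le (B' C' : set W) : basis_set B' -> basis_set C' -> B' #<= C'.
  by move=> hB hC; apply: Cantor_Bernstein; exact: card_le.
move=> [freeB' spanB'] [_ spanC']; have [finC|infC] := pselect (finite_set C').
  exact: free_set_card_le_finite.
exact: basis_set_card_le_infinite.
Qed.

End Dimension.

Lemma free_set_lcoef_linear (K : fieldType) (W W' : lmodType K)
    (f : {linear W -> W'}) (B' : set W') s x :
  free_set B' -> {in s, forall p, B' (f p.2) \/ f p.2 = 0} ->
  {in s, forall p, (f p.2 == f x) = (p.2 == x)} -> B' (f x) ->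
  lcomb s = 0 -> lcoef s x = 0.
Proof.
move=> freeB' sB' sep B'fx s0.
have -> : lcoef s x = lcoef [seq (p.1, f p.2) | p <- s] (f x).
  rewrite /lcoef big_map big_seq_cond [RHS]big_seq_cond; apply: eq_bigl => p.
  by case: (boolP (p \in s)) => //= ps; rewrite sep.
apply: (free_set_lcoef freeB') => //; last by rewrite -lcomb_linear s0 linear0.
by move=> _ /mapP [p ps ->]; exact: sB'.
Qed.

Section DirectSumBasis.
Variables (K : fieldType) (W1 W2 : lmodType K).

Definition dsum_set (B1 : set W1) (B2 : set W2) : set (W1 * W2) :=
  (fun x => (x, 0)) @` B1 `|` (fun y => (0, y)) @` B2.

Lemma spanning_set_dsum (B1 : set W1) (B2 : set W2) :
  spanning_set B1 -> spanning_set B2 -> spanning_set (dsum_set B1 B2).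
Proof.
move=> span1 span2 [v1 v2].
have [t1 t1B ->] := span1 v1; have [t2 t2B ->] := span2 v2.
exists ([seq (p.1, (p.2, 0)) | p <- t1] ++ [seq (p.1, (0, p.2)) | p <- t2]).
  move=> q; rewrite mem_cat => /orP [] /mapP [p pt ->].
    by left; exists p.2 => //; exact: t1B.
  by right; exists p.2 => //; exact: t2B.
have lcomb_l t : lcomb [seq (p.1, (p.2, 0 : W2)) | p <- t] = (lcomb t, 0).
  elim: t => [|p t IH]; first by rewrite /lcomb !big_nil.
  by rewrite /= !lcomb_cons IH; congr pair; rewrite /= scaler0 addr0.
have lcomb_r t : lcomb [seq (p.1, (0 : W1, p.2)) | p <- t] = (0, lcomb t).
  elim: t => [|p t IH]; first by rewrite /lcomb !big_nil.
  by rewrite /= !lcomb_cons IH; congr pair; rewrite /= scaler0 addr0.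
rewrite /lcomb big_cat -!/(lcomb _) lcomb_l lcomb_r.
by congr pair; rewrite /= ?addr0 ?add0r.
Qed.

Lemma free_set_dsum (B1 : set W1) (B2 : set W2) :
  free_set B1 -> free_set B2 -> free_set (dsum_set B1 B2).
Proof.
move=> free1 free2 s sB s0 x.
have [[b B1b <-]|n1] := pselect (((fun x => (x, 0)) @` B1) x).
  have b0 : b != 0 by apply: contra_notN (free_set_neq0 free1) => /eqP <-.
  apply: (free_set_lcoef_linear (f := fst) free1) => // p /sB.
    by case=> -[y By <-]; [left | right].
  by case=> -[y By <-]; rewrite /= xpair_eqE ?eqxx ?andbT // eq_sym (negbTE b0).
have [[b B2b <-]|n2] := pselect (((fun y => (0, y)) @` B2) x).
  have b0 : b != 0 by apply: contra_notN (free_set_neq0 free2) => /eqP <-.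
  apply: (free_set_lcoef_linear (f := snd) free2) => // p /sB.
    by case=> -[y By <-]; [right | left].
  by case=> -[y By <-]; rewrite /= xpair_eqE ?eqxx // eq_sym (negbTE b0) andbF.
apply: lcoef_eq0 => p /sB [] [y By ey]; apply/eqP => e.
  by apply: n1; exists y; rewrite // ey.
by apply: n2; exists y; rewrite // ey.
Qed.

Lemma basis_set_dsum (B1 : set W1) (B2 : set W2) :
  basis_set B1 -> basis_set B2 -> basis_set (dsum_set B1 B2).
Proof.
move=> [free1 span1] [free2 span2].
by split; [exact: free_set_dsum | exact: spanning_set_dsum].
Qed.

End DirectSumBasis.

Section HamelTransport.
Variables (K : fieldType) (W : lmodType K) (T : Type) (add : T -> T -> T)
  (zero : T) (sm : K -> T -> T) (phi : W -> T).
Hypotheses (phiD : {morph phi : x y / x + y >-> add x y}) (phi0 : phi 0 = zero)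
  (phiZ : forall a, {morph phi : x / a *: x >-> sm a x}) (phi_inj : injective phi).

Lemma lincomb_morph n (c : 'I_n -> K) (g : 'I_n -> W) :
  phi (\sum_(i < n) c i *: g i) = lincomb add zero sm c (phi \o g).
Proof.
by rewrite /lincomb (big_morph phi phiD phi0); apply: eq_bigr => i _; rewrite phiZ.
Qed.

Lemma hamel_basis_preimage (U H : set T) :
  range phi = U -> hamel_basis add zero sm U H -> basis_set (phi @^-1` H).
Proof.
move=> imphi [HU [indepH spanH]]; split.
  apply: lin_indep_free_set => n f c finj fH s0.
  apply: (indepH n (phi \o f) c) => //; first by move=> i j /phi_inj /finj.
  by rewrite -lincomb_morph; move: s0; rewrite /lincomb => ->.
apply: spans_spanning_set => w _.
have Uw : U (phi w) by rewrite -imphi; exists w.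
have [n [f [c [fH phiw]]]] := spanH (phi w) Uw.
have [g phig] : {g : 'I_n -> W & forall i, phi (g i) = f i}.
  apply: (@choice _ _ (fun i v => phi v = f i)) => i.
  by have := HU _ (fH i); rewrite -imphi => -[v _ <-]; exists v.
exists n, g, c; split=> [i|]; first by rewrite /preimage /= phig.
apply: phi_inj; rewrite phiw lincomb_morph; congr lincomb.
by apply: funext => i /=; rewrite phig.
Qed.

End HamelTransport.

Section EvsTheory.
Variables (K : fieldType) (T : Type) (o : evs_ops K T) (Ho : is_evs o).
Local Notation le := (ev_le o).
Local Notation add := (ev_add o).
Local Notation th := (ev_zero o).
Local Notation sm := (ev_smul o).

Lemma le_prim_eq y z : le y z -> prim o z -> y = z.
Proof. by move=> yz pz; apply: contrapT => nyz; exact: pz y nyz yz. Qed.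

Lemma ev_smul_th a : sm a th = th.
Proof. by apply/(ev_smul_eq0 Ho); right. Qed.

Lemma ev_add_th x : add x th = x.
Proof. by rewrite (ev_addC Ho) (ev_add0 Ho). Qed.

Lemma ev_addACA a b c d : add (add a b) (add c d) = add (add a c) (add b d).
Proof.
rewrite -(ev_addA Ho) [add b (add c d)](ev_addA Ho) [add b c](ev_addC Ho).
by rewrite -(ev_addA Ho) (ev_addA Ho).
Qed.

Lemma prim_th : prim o th.
Proof. by apply/(ev_inv_prim Ho); rewrite ev_smul_th (ev_add0 Ho). Qed.

Lemma prim_add p q : prim o p -> prim o q -> prim o (add p q).
Proof.
move=> /(ev_inv_prim Ho) hp /(ev_inv_prim Ho) hq; apply/(ev_inv_prim Ho).
by rewrite (ev_smulD Ho) ev_addACA hp hq (ev_add0 Ho).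
Qed.

Lemma prim_smul a p : prim o p -> prim o (sm a p).
Proof.
move=> /(ev_inv_prim Ho) hp; apply/(ev_inv_prim Ho).
by rewrite (ev_smulA Ho) mulrC -(ev_smulA Ho) -(ev_smulD Ho) hp ev_smul_th.
Qed.

(* The subdistributivity of (A3) becomes an equality because its right-hand
   side is primitive, hence minimal. *)
Lemma prim_smulDl a b p : prim o p -> sm (a + b) p = add (sm a p) (sm b p).
Proof.
move=> pp; apply: le_prim_eq; first exact: (ev_smul_addle Ho).
by apply: prim_add; apply: prim_smul.
Qed.

Lemma Lset_refl x : Lset o x x.
Proof.
exists 1, th; split; [exact/eqP/oner_neq0 | exact: prim_th |].
by rewrite (ev_smul1 Ho) ev_add_th; exact: (ev_le_refl Ho).
Qed.

Lemma Lset_trans x y z : Lset o x y -> Lset o y z -> Lset o x z.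
Proof.
move=> [b [q [b0 pq le2]]] [a [p [a0 pp le1]]].
exists (a * b), (add (sm a q) p); split.
- by apply/eqP; rewrite mulf_neq0 //; apply/eqP.
- by apply: prim_add => //; exact: prim_smul.
apply: (ev_le_trans Ho) le1.
have := ev_le_add Ho p (ev_le_smul Ho a le2).
by rewrite (ev_smulD Ho) (ev_smulA Ho) (ev_addA Ho).
Qed.

Lemma evs_basisP B : evs_basis o B <->
  [/\ B `<=` ~` prim o, orderly_indep o B,
      forall x, ~ prim o x -> exists2 b, B b & Lset o b x &
      forall b x, B b -> Lset o b x -> ~ prim o x].
Proof.
split=> [[BN [indB [_ eqB]]]|[BN indB cover Lprim]].
  split=> // [x nx|b x Bb Lx].
    by have : (~` prim o) x by []; rewrite eqB => -[b]; exists b.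
  by have : (~` prim o) x by rewrite eqB; exists b.
split=> //; split=> //; split=> //.
by apply/seteqP; split=> [x /cover [b Bb Lx]|x [b Bb /Lprim]]; [exists b | apply].
Qed.

Lemma evs_basis_Lset_eq B b c :
  evs_basis o B -> B b -> B c -> Lset o c b -> b = c.
Proof.
move=> /evs_basisP [_ indB _ _] Bb Bc Lb; apply: contrapT => bc.
by apply: (indB b c Bb Bc bc); left.
Qed.

Lemma evs_basis_Lset_sym B C b c : evs_basis o B -> evs_basis o C ->
  B b -> C c -> Lset o c b -> Lset o b c.
Proof.
move=> basisB /evs_basisP [CN _ _ _] Bb Cc Lb.
have /evs_basisP [_ _ coverB _] := basisB.
have [b' Bb' Lc] := coverB c (CN c Cc).
by rewrite (evs_basis_Lset_eq basisB Bb Bb' (Lset_trans Lc Lb)).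
Qed.

Lemma evs_basis_card_eq B C : evs_basis o B -> evs_basis o C -> (B #= C)%card.
Proof.
suff card_le (B' C' : set T) : evs_basis o B' -> evs_basis o C' -> (B' #<= C')%card.
  by move=> hB hC; apply: Cantor_Bernstein; exact: card_le.
move=> basisB basisC; have /evs_basisP [BN _ _ _] := basisB.
have /evs_basisP [_ _ coverC _] := basisC.
have [c_ hc] : {c_ : T -> T & forall b, B' b -> C' (c_ b) /\ Lset o (c_ b) b}.
  apply: (@choice _ _ (fun b c => B' b -> C' c /\ Lset o c b)) => b.
  have [/BN/coverC [c Cc Lb]|] := pselect (B' b); last by exists b.
  by exists c.
apply: (card_le_injon (f := c_)) => [_ [b Bb <-]|b b' /[!in_setE] Bb Bb' e].
  by case: (hc b Bb).
have [Cc Lb] := hc b Bb; have [_ Lb'] := hc b' Bb'.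
have Lc := evs_basis_Lset_sym basisB basisC Bb Cc Lb.
apply/esym/(evs_basis_Lset_eq basisB Bb' Bb).
by apply: Lset_trans Lc _; rewrite e.
Qed.

End EvsTheory.

Section EvsRetraction.
Variables (K : fieldType) (T1 T2 : Type) (o1 : evs_ops K T1) (o2 : evs_ops K T2).
Variables (g : T2 -> T1) (h : T1 -> T2).
Hypotheses (hK : cancel h g) (prim_g : forall x, prim o2 x <-> prim o1 (g x))
  (Lset_g : forall x y, Lset o2 x y <-> Lset o1 (g x) (g y)).

Lemma evs_basis_image B : evs_basis o2 B -> evs_basis o1 (g @` B).
Proof.
move=> /evs_basisP [BN indB cover Lprim]; apply/evs_basisP; split.
- by move=> _ [b Bb <-] /prim_g; exact: BN.
- move=> _ _ [b Bb <-] [c Bc <-] bc dep.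
  apply: (indB b c Bb Bc); first by move=> e; apply: bc; rewrite e.
  by case: dep => /Lset_g; [left | right].
- move=> x nx; have [b Bb Lb] : exists2 b, B b & Lset o2 b (h x).
    by apply: cover; rewrite prim_g hK.
  by exists (g b); [exists b | rewrite -[x]hK -Lset_g].
- move=> _ x [b Bb <-] Lx; rewrite -[x]hK -prim_g; apply: (Lprim b) => //.
  by rewrite Lset_g hK.
Qed.

Lemma evs_basis_section B : evs_basis o1 B -> evs_basis o2 (h @` B).
Proof.
move=> /evs_basisP [BN indB cover Lprim]; apply/evs_basisP; split.
- by move=> _ [b Bb <-] /prim_g; rewrite hK; exact: BN.
- move=> _ _ [b Bb <-] [c Bc <-] bc dep.
  apply: (indB b c Bb Bc); first by move=> e; apply: bc; rewrite e.
  by case: dep => /Lset_g; rewrite !hK; [left | right].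
- move=> x /prim_g /cover [b Bb Lb].
  by exists (h b); [exists b | rewrite Lset_g hK].
- by move=> _ x [b Bb <-] /Lset_g; rewrite hK prim_g => /Lprim; apply.
Qed.

Lemma evs_basis_image_card B : is_evs o1 -> evs_basis o2 B -> (g @` B #= B)%card.
Proof.
move=> Ho1 basisB; apply: inj_card_eq => x y /[!in_setE] Bx By e.
by apply: (evs_basis_Lset_eq basisB Bx By); rewrite Lset_g e; exact: Lset_refl.
Qed.

End EvsRetraction.

(* [Ho] does not enter the carrier; it is a parameter so that the vector space
   instances below can use the axioms. *)
Definition prim_space (K : fieldType) (T : Type) (o : evs_ops K T) (Ho : is_evs o) :=
  {x : T | prim o x}.

HB.instance Definition _ (K : fieldType) (T : Type) (o : evs_ops K T) (Ho : is_evs o) :=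
  gen_eqMixin (prim_space Ho).
HB.instance Definition _ (K : fieldType) (T : Type) (o : evs_ops K T) (Ho : is_evs o) :=
  gen_choiceMixin (prim_space Ho).

Section PrimSpace.
Variables (K : fieldType) (T : Type) (o : evs_ops K T) (Ho : is_evs o).
Local Notation X0 := (prim_space Ho).

Lemma prim_val_inj : injective (sval : X0 -> T).
Proof. by move=> [x px] [y py]; exact: eq_exist. Qed.

Definition prim_space_zero : X0 := exist _ _ (prim_th Ho).
Definition prim_space_add (x y : X0) : X0 :=
  exist _ _ (prim_add Ho (svalP x) (svalP y)).
Definition prim_space_scale (a : K) (x : X0) : X0 :=
  exist _ _ (prim_smul Ho (a := a) (svalP x)).
Definition prim_space_opp (x : X0) : X0 := prim_space_scale (-1) x.

Lemma prim_space_addA : associative prim_space_add.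
Proof. by move=> x y z; apply: prim_val_inj; exact: (ev_addA Ho). Qed.

Lemma prim_space_addC : commutative prim_space_add.
Proof. by move=> x y; apply: prim_val_inj; exact: (ev_addC Ho). Qed.

Lemma prim_space_add0 : left_id prim_space_zero prim_space_add.
Proof. by move=> x; apply: prim_val_inj; exact: (ev_add0 Ho). Qed.

Lemma prim_space_addN : left_inverse prim_space_zero prim_space_opp prim_space_add.
Proof.
move=> x; apply: prim_val_inj => /=; rewrite (ev_addC Ho).
exact/(ev_inv_prim Ho)/svalP.
Qed.

HB.instance Definition _ := GRing.isZmodule.Build X0
  prim_space_addA prim_space_addC prim_space_add0 prim_space_addN.

Lemma prim_space_scaleA a b x :
  prim_space_scale a (prim_space_scale b x) = prim_space_scale (a * b) x.
Proof. by apply: prim_val_inj; exact: (ev_smulA Ho). Qed.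

Lemma prim_space_scale1 : left_id 1 prim_space_scale.
Proof. by move=> x; apply: prim_val_inj; exact: (ev_smul1 Ho). Qed.

Lemma prim_space_scaleDr : right_distributive prim_space_scale +%R.
Proof. by move=> a x y; apply: prim_val_inj; exact: (ev_smulD Ho). Qed.

Lemma prim_space_scaleDl x : {morph prim_space_scale^~ x : a b / a + b}.
Proof.
by move=> a b; apply: prim_val_inj; exact: (prim_smulDl Ho _ _ (svalP x)).
Qed.

HB.instance Definition _ := GRing.Zmodule_isLmodule.Build K X0
  prim_space_scaleA prim_space_scale1 prim_space_scaleDr prim_space_scaleDl.

End PrimSpace.

Section ProductEvs.
Local Open Scope card_scope.
Variables (K : fieldType) (T : Type) (o : evs_ops K T) (Ho : is_evs o) (V : lmodType K).
Local Notation po := (prod_ops o V).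
Local Notation X0 := (prim_space Ho).

Lemma prim_prod u : prim po u <-> prim o u.1.
Proof.
split=> [pu y yu le|pu [y v] yu [/= le ev]].
  by apply: (pu (y, u.2)) => [e|]; [apply: yu; rewrite -e | split].
by apply: yu; rewrite (le_prim_eq le pu) ev -surjective_pairing.
Qed.

Lemma Lset_prod u w : Lset po u w <-> Lset o u.1 w.1.
Proof.
split=> [[a [[p q] [a0 /prim_prod pp [le _]]]]|[a [p [a0 pp le]]]].
  by exists a, p.
exists a, (p, w.2 - a *: u.2); split=> //; first exact/prim_prod.
by split=> //=; rewrite addrC subrK.
Qed.

Lemma has_basis_prod : has_basis po <-> has_basis o.
Proof.
split=> [[B' basisB']|[B basisB]].
  exists (fst @` B').
  exact: (evs_basis_image (h := fun x => (x, 0)) _ prim_prod Lset_prod).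
exists ((fun x => (x, 0)) @` B).
exact: (evs_basis_section (g := fst) _ prim_prod Lset_prod).
Qed.

Lemma evs_basis_prod_card B B' : evs_basis o B -> evs_basis po B' -> B' #= B.
Proof.
move=> basisB basisB'.
have basis_fst :=
  evs_basis_image (h := fun x => (x, 0)) (fun _ => erefl) prim_prod Lset_prod basisB'.
rewrite -(card_eql (evs_basis_image_card Lset_prod Ho basisB')).
exact: evs_basis_card_eq basis_fst basisB.
Qed.

Lemma card_dsum_prim (H1 : set T) (H2 : set V) : H1 `<=` prim o -> ~ H2 0 ->
  dsum_set (sval @^-1` H1 : set X0) H2 #=
  [set inl x | x in H1] `|` [set inr v | v in H2].
Proof.
move=> H1p nH2.
pose f (w : X0 * V) : T + V := if w.2 == 0 then inl (sval w.1) else inr w.2.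
have fl x : f (x, 0) = inl (sval x) by rewrite /f eqxx.
have fr y : H2 y -> f (0, y) = inr y.
  by move=> H2y; rewrite /f ifN //; apply: contra_notN nH2 => /eqP <-.
have -> : [set inl x | x in H1] `|` [set inr v | v in H2] =
    f @` dsum_set (sval @^-1` H1 : set X0) H2.
  apply/seteqP; split=> [_ [[t H1t <-]|[y H2y <-]]|_ [_ [[x H1x <-]|[y H2y <-]] <-]].
  - pose x : X0 := exist _ t (H1p t H1t).
    by exists (x, 0); [left; exists x | rewrite fl].
  - by exists (0, y); [right; exists y | rewrite fr].
  - by rewrite fl; left; exists (sval x).
  - by rewrite fr //; right; exists y.
rewrite card_eq_sym; apply: inj_card_eq.
move=> w w'; rewrite !in_setE => -[[x H1x <-]|[y H2y <-]] [[x' H1x' <-]|[y' H2y' <-]].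
- by rewrite !fl => -[/prim_val_inj ->].
- by rewrite fl fr.
- by rewrite fl fr.
- by rewrite !fr // => -[->].
Qed.

Lemma prim_hamel_basis_card (H : set (T * V)) (H1 : set T) (H2 : set V) :
  prim_hamel_basis po H -> prim_hamel_basis o H1 -> vs_hamel_basis H2 ->
  H #= [set inl x | x in H1] `|` [set inr v | v in H2].
Proof.
move=> hH hH1 hH2.
pose phi (w : X0 * V) : T * V := (sval w.1, w.2).
have phi_inj : injective phi by move=> [x v] [y w] [/prim_val_inj -> ->].
have range_phi : range phi = prim po.
  apply/seteqP; split=> [_ [w _ <-]|u /prim_prod pu]; first exact/prim_prod/svalP.
  by exists (exist _ u.1 pu, u.2); rewrite // /phi -surjective_pairing.
have range_val : range (sval : X0 -> T) = prim o.
  apply/seteqP; split=> [_ [x _ <-]|t pt]; [exact: svalP | by exists (exist _ t pt)].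
have basisH := hamel_basis_preimage (phi := phi)
  (fun _ _ => erefl) erefl (fun _ _ => erefl) phi_inj range_phi hH.
have basisH1 := hamel_basis_preimage (phi := sval : X0 -> T)
  (fun _ _ => erefl) erefl (fun _ _ => erefl) (@prim_val_inj _ _ _ Ho) range_val hH1.
have basisH2 : basis_set H2.
  case: hH2 => _ [indepH2 spanH2].
  by split; [exact: lin_indep_free_set | exact: spans_spanning_set].
apply: card_eq_trans (card_dsum_prim (proj1 hH1) (free_set_neq0 basisH2.1)).
rewrite -(card_eql (card_eq_preimage phi_inj _)); last by rewrite range_phi; case: hH.
exact: basis_set_card_eq basisH (basis_set_dsum basisH1 basisH2).
Qed.

End ProductEvs.

Lemma thm8_for_field (K : fieldType) : thm8_for K.
Proof.
move=> T o V Ho; split; first exact: has_basis_prod.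
move=> B B' basisB basisB'; split; first exact: evs_basis_prod_card basisB basisB'.
exact: prim_hamel_basis_card.
Qed.

Theorem mainTheorem8 (R : realType) : thm8_for R /\ thm8_for R[i].
Proof. by split; apply: thm8_for_field. Qed.
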